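(* Let $M$ be a matroid of rank $r$ on a finite linearly ordered set $E$. Then $\mathcal A(M)$ is an antichain, and $\mathcal A(U)\cap\mathcal A(U')=\emptyset$ for all distinct $U,U'\in\mathcal U^*(M)$.
   Context: Graded lexicographic order on $2^E$: $X\prec Y$ if $|X|<|Y|$, or $|X|=|Y|$ and $\min(X\triangle Y)\in X$; $\min\mathcal X$ is the $\prec$-smallest member of a nonempty $\mathcal X$. $X$ is $k$-closed in $M$ if $\mathrm{cl}_M(Y)\subseteq X$ for all $Y\subseteq X$ with $|Y|\le k$; $\mathrm{cl}_k(X)$ is the intersection of all $k$-closed supersets of $X$ (so $\mathrm{cl}_{-1}(X)=X$). For a flat $F$ of rank $k$, $U^*_F=\min\{U:\mathrm{cl}_{k-1}(U)=F\}$; $\mathcal U^*_k=\{U^*_F: F\text{ a flat of rank }k,\ |U^*_F|>k\}$ for $0\le k\le r-1$, and $\mathcal U^*(M)=\bigcup_{k=0}^{r-1}\mathcal U^*_k$. For $U\in\mathcal U^*_k$ define $\mathcal A(U)=\binom{U}{r-1}$ if $k=r-1$; $\mathcal A(U)=\binom{U}{k}\setminus\{\min\binom{U}{k}\}$ if $0<k<r-1$; $\mathcal A(U)=\binom{U}{1}$ if $k=0$. Here $\binom{U}{j}$ is the set of $j$-subsets of $U$. Finally $\mathcal A(M)=\bigcup_{k=0}^{r-1}\bigcup_{U\in\mathcal U^*_k}\mathcal A(U)$. *)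

From mathcomp Require Import all_boot all_order all_algebra.
Set Implicit Arguments. Unset Strict Implicit. Unset Printing Implicit Defensive.

(* Ground set E = 'I_n = {0,...,n-1} with its natural linear order. *)

Record matroid (n : nat) := Matroid {
  indep : pred {set 'I_n};
  indep0 : indep set0;
  indep_sub : forall A B : {set 'I_n}, B \subset A -> indep A -> indep B;
  indep_aug : forall A B : {set 'I_n}, indep A -> indep B -> #|A| < #|B| ->
     exists2 e, e \in B :\: A & indep (e |: A)
}.

Section Defs.
Variables (n : nat) (M : matroid n).
Local Notation E := 'I_n.

Definition rk (X : {set E}) : nat :=
  \max_(Y : {set E} | (Y \subset X) && indep M Y) #|Y|.
Definition mrank : nat := rk [set: E].

Definition cl (X : {set E}) : {set E} := [set e | rk (e |: X) == rk X].
Definition is_flat (F : {set E}) : bool := cl F == F.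

Definition glex_lt (X Y : {set E}) : bool :=
  (#|X| < #|Y|) ||
  ((#|X| == #|Y|) &&
   [exists x in X :\: Y,
      [forall y in (X :\: Y) :|: (Y :\: X), (nat_of_ord x <= nat_of_ord y)%N]]).

(* the glex-smallest member of a family (set0 if the family is empty) *)
Definition glex_min (F : {set {set E}}) : {set E} :=
  odflt set0 [pick U in F | [forall V in F, (V == U) || glex_lt U V]].

(* k-closed sets, k an integer (k = -1 allowed) *)
Definition kclosed (k : int) (X : {set E}) : bool :=
  [forall Y : {set E}, ((Y \subset X) && (#|Y|%:Z <= k)%R) ==> (cl Y \subset X)].

Definition clk (k : int) (X : {set E}) : {set E} :=
  \bigcap_(Y : {set E} | (X \subset Y) && kclosed k Y) Y.

Definition Ustar (F : {set E}) : {set E} :=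
  glex_min [set U : {set E} | clk ((rk F)%:Z - 1)%R U == F].

Definition Ustar_k (k : nat) : {set {set E}} :=
  [set Ustar F | F in [set F : {set E} | is_flat F && (rk F == k) && (k < #|Ustar F|)]].

Definition binom (U : {set E}) (j : nat) : {set {set E}} :=
  [set X : {set E} | (X \subset U) && (#|X| == j)].

Definition Aset (k : nat) (U : {set E}) : {set {set E}} :=
  if k == mrank.-1 then binom U mrank.-1
  else if k == 0 then binom U 1
  else binom U k :\ glex_min (binom U k).

Definition AM : {set {set E}} :=
  \bigcup_(k < mrank) \bigcup_(U in Ustar_k k) Aset k U.

Definition UstarM : {set {set E}} := \bigcup_(k < mrank) Ustar_k k.

Definition antichain (F : {set {set E}}) : Prop :=
  forall X Y, X \in F -> Y \in F -> X \subset Y -> X = Y.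

End Defs.

(* U = U^*_F is glex-minimal among the sets whose (k-1)-closure is F.  Deleting from U an element
   spanned by fewer than k others, or replacing a k-subset of U by a glex-smaller set with the
   same closure, leaves the (k-1)-closure unchanged but makes U glex-smaller.  Hence every
   k-subset of U is independent and spans F, and a k-subset of U that also lies in some
   U^*_F' with rk F' > k must be the glex-first k-subset of U, which is exactly the one removed
   in A(U).  For k = 0 the set U consists of loops, for k > 0 of non-loops, which settles the
   remaining cases. *)

From Pilot Require Import Defs.
From mathcomp Require Import all_boot all_order all_algebra.
From mathcomp Require Import zify.
Set Implicit Arguments. Unset Strict Implicit. Unset Printing Implicit Defensive.

Section MatroidRank.
Variables (n : nat) (M : matroid n).
Local Notation E := 'I_n.
Local Notation rk := (rk M).
Local Notation cl := (cl M).
Implicit Types X Y I F : {set E}.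

Lemma rk_leq_card X : rk X <= #|X|.
Proof. by apply/bigmax_leqP => Y /andP[YX _]; apply: subset_leq_card. Qed.

Lemma indep_leq_rk I X : I \subset X -> indep M I -> #|I| <= rk X.
Proof.
move=> IX iI.
by apply: (leq_bigmax_cond (P := fun Y : {set E} => (Y \subset X) && indep M Y)
                           (F := fun Y : {set E} => #|Y|)); rewrite IX iI.
Qed.

Lemma rkS X Y : X \subset Y -> rk X <= rk Y.
Proof.
move=> XY; apply/bigmax_leqP => I /andP[IX iI].
by apply: indep_leq_rk iI; apply: subset_trans XY.
Qed.

Lemma rk_basis X : exists I, [/\ I \subset X, indep M I & #|I| = rk X].
Proof.
have P0 : (set0 \subset X) && indep M set0 by rewrite sub0set indep0.
rewrite /Defs.rk (bigmax_eq_arg set0 P0).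
by case: arg_maxnP => // I /andP[IX iI] _; exists I.
Qed.

Lemma indepE X : indep M X = (rk X == #|X|).
Proof.
apply/idP/eqP => [iX | rkX]; first by apply/anti_leq; rewrite rk_leq_card indep_leq_rk.
have [I [IX iI cI]] := rk_basis X.
suff -> : X = I by exact: iI.
by apply/esym/eqP; rewrite eqEcard IX cI rkX leqnn.
Qed.

Lemma rk_set0 : rk set0 = 0.
Proof. by apply/eqP; rewrite -leqn0 -(cards0 E) rk_leq_card. Qed.

Lemma subset_cl X : X \subset cl X.
Proof. by apply/subsetP => x xX; rewrite inE (setUidPr _) // sub1set. Qed.

Lemma cl_indep_flat F X :
  cl F = F -> X \subset F -> indep M X -> #|X| = rk F -> cl X = F.
Proof.
move=> clF XF iX cX; have rkX : rk X = #|X| by apply/eqP; rewrite -indepE.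
apply/setP => e; rewrite inE; apply/eqP/idP => [rkeX | eF]; last first.
  apply/anti_leq/andP; split; last exact/rkS/subsetUr.
  by rewrite rkX cX; apply: rkS; rewrite subUset sub1set eF.
rewrite -clF inE eqn_leq (rkS (subsetUr _ _)) andbT leqNgt; apply/negP => ltF.
have [I [IeF iI cI]] := rk_basis (e |: F).
have ltXI : #|X| < #|I| by rewrite cI cX.
have [f /setDP[fI fX] ifX] := indep_aug iX iI ltXI.
have cfX : #|f |: X| = (rk F).+1 by rewrite cardsU1 fX cX.
case/setU1P: (subsetP IeF f fI) => [fe | fF].
  by have := indep_leq_rk (subxx _) ifX; rewrite cfX fe rkeX rkX cX ltnn.
have sub : f |: X \subset F by rewrite subUset sub1set fF XF.
by have := indep_leq_rk sub ifX; rewrite cfX ltnn.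
Qed.

Lemma dep_mem_cl X : ~~ indep M X ->
  exists e, exists2 Z : {set E}, [/\ e \in X, Z \subset X :\ e & #|Z| < #|X|] & e \in cl Z.
Proof.
move=> dX; have [I [IX iI cI]] := rk_basis X.
have ltI : #|I| < #|X|.
  rewrite ltn_neqAle subset_leq_card // andbT.
  by apply: contra dX => /eqP cIX; rewrite indepE -cI cIX.
have /set0Pn[e /setDP[eX eI]] : X :\: I != set0.
  by rewrite setD_eq0; apply: contraL ltI => /subset_leq_card; rewrite leqNgt.
exists e; exists I.
  split=> //; apply/subsetP => x xI; rewrite !inE (subsetP IX) // andbT.
  by apply: contraNneq eI => <-.
move: iI; rewrite indepE => /eqP rkI.
rewrite inE eqn_leq (rkS (subsetUr _ _)) andbT rkI cI.
by apply: rkS; rewrite subUset sub1set eX.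
Qed.

End MatroidRank.

Section GradedLex.
Variable n : nat.
Implicit Types U V X : {set 'I_n}.

Lemma glex_ltxx U : ~~ glex_lt U U.
Proof. by rewrite /glex_lt ltnn eqxx /=; apply/existsP => -[x]; rewrite setDv inE. Qed.

Lemma glex_lt_card U V : glex_lt U V -> #|U| <= #|V|.
Proof. by case/orP => [/ltnW // | /andP[/eqP -> _]]. Qed.

Lemma glex_lt_asym U V : glex_lt U V -> ~~ glex_lt V U.
Proof.
move=> ltUV; apply/negP => ltVU.
have eUV : #|U| = #|V| by apply/anti_leq; rewrite !glex_lt_card.
move: ltUV ltVU; rewrite /glex_lt eUV ltnn eqxx /=.
case/existsP => x /andP[xUV /forallP minx]; case/existsP => y /andP[yVU /forallP miny].
have := minx y; rewrite inE yVU orbT /= => xy.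
have := miny x; rewrite inE xUV orbT /= => yx.
have exy : x = y by apply/val_inj/anti_leq; rewrite xy yx.
by move: xUV yVU; rewrite exy !inE => /andP[/negP yV _] /andP[_ /yV].
Qed.

Lemma glex_lt_total U V : U != V -> glex_lt U V || glex_lt V U.
Proof.
move=> neUV; rewrite /glex_lt; case: ltngtP => //= _.
set D := (U :\: V) :|: (V :\: U).
have /set0Pn[i0 Di0] : D != set0.
  apply: contraNneq neUV => D0.
  by rewrite eqEsubset -!setD_eq0 -!subset0 -D0 subsetUl subsetUr.
have [m Dm minm] := arg_minnP (fun i : 'I_n => val i) Di0.
case/setUP: (Dm) => [mUV | mVU]; [apply/orP; left | apply/orP; right];
  apply/existsP; exists m; rewrite ?mUV ?mVU /=; apply/forallP => y; apply/implyP.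
  exact: minm.
by rewrite setUC; apply: minm.
Qed.

Lemma glex_minP (Fam : {set {set 'I_n}}) U :
  glex_min Fam = U -> U != set0 ->
  U \in Fam /\ (forall V, V \in Fam -> (V == U) || glex_lt U V).
Proof.
rewrite /glex_min; case: pickP => [U0 /andP[U0F /forallP minU0] /= <- _ | _ /= <-];
  last by rewrite eqxx.
by split=> // V VF; have := minU0 V; rewrite VF.
Qed.

Lemma glex_lt_neq_min (Fam : {set {set 'I_n}}) X :
  X \in Fam -> X != glex_min Fam -> exists2 X1, X1 \in Fam & glex_lt X1 X.
Proof.
rewrite /glex_min; case: pickP => [U0 /andP[U0F /forallP minU0] /= XF neX | nomin XF _].
  by exists U0 => //; have := minU0 X; rewrite XF /= (negbTE neX).
have := nomin X; rewrite XF /= => /negbT; rewrite negb_forall => /existsP[V].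
rewrite negb_imply negb_or => /andP[VF /andP[neVX nltXV]].
by exists V => //; have := glex_lt_total neVX; rewrite (negbTE nltXV) orbF.
Qed.

Lemma glex_lt_exchange U X (X1 : {set 'I_n}) :
  X \subset U -> glex_lt X1 X -> glex_lt ((U :\: X) :|: X1) U.
Proof.
move=> XU ltX1X; set I := (U :\: X) :&: X1.
have cUX : #|X| + #|U :\: X| = #|U| by rewrite -(cardsID X U) (setIidPr XU).
have cW : #|(U :\: X) :|: X1| + #|I| = #|U :\: X| + #|X1| by rewrite cardsUI.
rewrite /glex_lt; case/orP: ltX1X => [ltc | /andP[/eqP ec /existsP[x /andP[xX1X /forallP minx]]]].
  by apply/orP; left; lia.
have [I0 | nI0] := eqVneq I set0; last first.
  by rewrite -card_gt0 in nI0; apply/orP; left; lia.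
have xU : x \notin U.
  case/setDP: xX1X => xX1 xX; apply/negP => xU.
  have : x \in I by rewrite !inE xU xX xX1.
  by rewrite I0 inE.
apply/orP; right; rewrite I0 cards0 addn0 in cW; apply/andP; split; first by apply/eqP; lia.
apply/existsP; exists x; rewrite !inE xU /= (setDP xX1X).1 orbT /=.
apply/forallP => y; apply/implyP => yD; apply: (implyP (minx y)); move: yD.
rewrite !inE; case yX1: (y \in X1); case yX: (y \in X); case yU: (y \in U) => //=.
by move: (subsetP XU y); rewrite yX yU => /(_ isT).
Qed.

End GradedLex.

Section KClosure.
Variables (n : nat) (M : matroid n).
Implicit Types U X Y Z : {set 'I_n}.

Lemma subset_clk c X : X \subset clk M c X.
Proof. by apply/bigcapsP => Y /andP[]. Qed.

Lemma eq_clk c X Y :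
  (forall Z, kclosed M c Z -> (X \subset Z) = (Y \subset Z)) -> clk M c X = clk M c Y.
Proof.
move=> eqXY; apply: eq_bigl => Z.
by case kZ: (kclosed M c Z); rewrite ?andbF ?andbT ?eqXY.
Qed.

Lemma kclosed_cl c Y Z :
  kclosed M c Y -> Z \subset Y -> (#|Z|%:Z <= c)%R -> cl M Z \subset Y.
Proof. by move=> /forallP /(_ Z) /implyP kY ZY cZ; apply: kY; rewrite ZY. Qed.

Lemma clk_setD1 c U Z e : e \in U -> Z \subset U :\ e -> (#|Z|%:Z <= c)%R ->
  e \in cl M Z -> clk M c (U :\ e) = clk M c U.
Proof.
move=> eU ZU cZ eZ; apply: eq_clk => Y kY; apply/idP/idP => UY; last first.
  exact: subset_trans (subsetDl _ _) UY.
have clZY : cl M Z \subset Y by apply: kclosed_cl kY (subset_trans ZU UY) cZ.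
by rewrite -(setD1K eU) subUset sub1set (subsetP clZY).
Qed.

Lemma clk_exchange c U X (X1 : {set 'I_n}) : X \subset U -> cl M X = cl M X1 ->
  (#|X|%:Z <= c)%R -> (#|X1|%:Z <= c)%R -> clk M c ((U :\: X) :|: X1) = clk M c U.
Proof.
move=> XU eqcl cX cX1; apply: eq_clk => Y kY; apply/idP/idP => sub.
  have X1Y : X1 \subset Y := subset_trans (subsetUr _ _) sub.
  have XY : X \subset Y.
    by apply: subset_trans (subset_cl M X) _; rewrite eqcl; apply: kclosed_cl kY X1Y cX1.
  by rewrite -(setID U X) (setIidPr XU) subUset XY (subset_trans (subsetUl _ _) sub).
rewrite subUset (subset_trans (subsetDl _ _) sub).
apply: subset_trans (subset_cl M X1) _; rewrite -eqcl.
exact: kclosed_cl kY (subset_trans XU sub) cX.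
Qed.

End KClosure.

Section UstarSpec.
Variables (n : nat) (M : matroid n).
Implicit Types U V X F : {set 'I_n}.

Definition clk_fiber k F := [set V | clk M (k%:Z - 1)%R V == F].

Record ustar_spec k U F : Prop := UstarSpec {
  ustar_flat : cl M F = F;
  ustar_rk : rk M F = k;
  ustar_fiber : U \in clk_fiber k F;
  ustar_min : forall V, V \in clk_fiber k F -> (V == U) || glex_lt U V;
  ustar_def : U = Ustar M F
}.

Lemma Ustar_kP k U : U \in Ustar_k M k -> exists F, ustar_spec k U F.
Proof.
case/imsetP => F; rewrite inE => /andP[/andP[/eqP flatF /eqP rkF] cardU] ->.
have nzU : Ustar M F != set0 by rewrite -card_gt0 (leq_ltn_trans _ cardU).
have [UF minU] := glex_minP (erefl (Ustar M F)) nzU.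
exists F; split=> //; by rewrite /clk_fiber -rkF.
Qed.

Section Spec.
Variables (k : nat) (U F : {set 'I_n}).
Hypothesis sU : ustar_spec k U F.

Lemma ustar_sub : U \subset F.
Proof. by move: (ustar_fiber sU); rewrite inE => /eqP <-; apply: subset_clk. Qed.

Lemma ustar_notin_cl e (Z : {set 'I_n}) :
  e \in U -> Z \subset U :\ e -> #|Z| < k -> e \notin cl M Z.
Proof.
move=> eU ZU cZ; apply/negP => eZ.
have cZ' : (#|Z|%:Z <= k%:Z - 1)%R by lia.
have UeF : U :\ e \in clk_fiber k F.
  by move: (ustar_fiber sU); rewrite !inE (clk_setD1 eU ZU cZ' eZ).
case/orP: (ustar_min sU UeF) => [/eqP UeU | /glex_lt_card].
  by move: eU; rewrite -UeU setD11.
by rewrite (cardsD1 e U) eU ltnn.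
Qed.

Lemma ustar_indep X : X \subset U -> #|X| <= k -> indep M X.
Proof.
move=> XU cX; apply: contraT => /dep_mem_cl[e [Z [eX ZX cZ] eZ]].
have := ustar_notin_cl (subsetP XU e eX) (subset_trans ZX (setSD _ XU)) (leq_trans cZ cX).
by rewrite eZ.
Qed.

Lemma ustar_span X : X \subset U -> #|X| = k -> cl M X = F.
Proof.
move=> XU cX; apply: cl_indep_flat (ustar_flat sU) _ _ _.
- exact: subset_trans XU ustar_sub.
- by apply: ustar_indep XU _; rewrite cX.
- by rewrite cX (ustar_rk sU).
Qed.

End Spec.

Lemma ustar0_disjoint k U F U' F' : ustar_spec 0 U F -> ustar_spec k U' F' -> 0 < k ->
  [disjoint U & U'].
Proof.
move=> sU sU' k_gt0; apply/pred0P => x /=; apply/negP => /andP[xU xU'].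
have xloop : x \in cl M set0.
  rewrite inE rk_set0 setU0 -leqn0 -(ustar_rk sU).
  by apply: rkS; rewrite sub1set (subsetP (ustar_sub sU)).
by have := ustar_notin_cl sU' xU' (sub0set _); rewrite cards0 xloop => /(_ k_gt0).
Qed.

Lemma ustar_eq k U F U' F' X : ustar_spec k U F -> ustar_spec k U' F' ->
  X \subset U -> X \subset U' -> #|X| = k -> U = U'.
Proof.
move=> sU sU' XU XU' cX.
by rewrite (ustar_def sU) (ustar_def sU') -(ustar_span sU XU cX) (ustar_span sU' XU' cX).
Qed.

Lemma ustar_exchange k k' U F U' F' X X1 : ustar_spec k U F -> ustar_spec k' U' F' -> k < k' ->
  X \subset U -> X \subset U' -> #|X| = k -> X1 \subset U -> #|X1| = k -> ~~ glex_lt X1 X.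
Proof.
move=> sU sU' ltkk' XU XU' cX X1U cX1; apply/negP => ltX1X.
have eqcl : cl M X = cl M X1 by rewrite (ustar_span sU XU cX) (ustar_span sU X1U cX1).
have cX' : (#|X|%:Z <= k'%:Z - 1)%R by lia.
have cX1' : (#|X1|%:Z <= k'%:Z - 1)%R by lia.
have WF : (U' :\: X) :|: X1 \in clk_fiber k' F'.
  by move: (ustar_fiber sU'); rewrite !inE (clk_exchange XU' eqcl cX' cX1').
have ltW := glex_lt_exchange XU' ltX1X.
case/orP: (ustar_min sU' WF) => [/eqP eW | /glex_lt_asym].
  by move: ltW; rewrite eW (negbTE (glex_ltxx _)).
by rewrite ltW.
Qed.

End UstarSpec.

Section Aset.
Variables (n : nat) (M : matroid n).
Implicit Types U X : {set 'I_n}.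

Definition Acard r k := if k == r.-1 then r.-1 else if k == 0 then 1 else k.

Lemma Acard_id r k : 0 < k -> k < r -> Acard r k = k.
Proof. by rewrite /Acard; case: eqP => [-> // | _]; case: eqP => // ->. Qed.

Lemma Acard_leq r k : k < r -> Acard r k <= r.-1.
Proof. by rewrite /Acard; case: eqP => // ne; case: eqP => [k0 | _]; lia. Qed.

Lemma Acard0 r : 1 < r -> Acard r 0 = 1.
Proof. by rewrite /Acard; case: eqP => //; lia. Qed.

Lemma Acard_gt r k k' : 0 < k -> k < Acard r k' -> k < k'.
Proof. by rewrite /Acard; case: eqP => [-> // | _]; case: eqP => // _; lia. Qed.

Lemma mem_Aset k U X : X \in Aset M k U -> X \subset U /\ #|X| = Acard (mrank M) k.
Proof.
rewrite /Aset /Acard; case: ifP => _; first by rewrite inE => /andP[-> /eqP].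
case: ifP => _; first by rewrite inE => /andP[-> /eqP].
by rewrite in_setD1 inE => /andP[_ /andP[-> /eqP]].
Qed.

Lemma Aset_mid k U X : X \in Aset M k U -> k != (mrank M).-1 -> k != 0 ->
  X \in binom U k /\ X != glex_min (binom U k).
Proof.
by move=> + /negbTE ntop /negbTE nz; rewrite /Aset ntop nz in_setD1 => /andP[-> ->].
Qed.

Lemma AM_antichain : antichain (AM M).
Proof.
move=> X Y /bigcupP[i _ /bigcupP[U Ui XA]] /bigcupP[i' _ /bigcupP[U' Ui' YA]] XY.
apply/eqP; rewrite eqEcard XY /= leqNgt; apply/negP => ltXY.
have [XU cX] := mem_Aset XA; have [YU' cY] := mem_Aset YA.
have XU' := subset_trans XY YU'.
have [F sU] := Ustar_kP Ui; have [F' sU'] := Ustar_kP Ui'.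
have [i_top | i_ntop] := eqVneq (i : nat) (mrank M).-1.
  by move: ltXY; rewrite cX cY /Acard i_top eqxx ltnNge Acard_leq.
have [i0 | i_gt0] := posnP i.
  have r_gt1 : 1 < mrank M by move: i_ntop (ltn_ord i); rewrite i0; lia.
  have i'_gt0 : 0 < i'.
    by rewrite lt0n; apply: contraTneq ltXY => i'0; rewrite cX cY i0 i'0 ltnn.
  have /set0Pn[x xX] : X != set0 by rewrite -card_gt0 cX i0 Acard0.
  rewrite i0 in sU; have := ustar0_disjoint sU sU' i'_gt0.
  by move/disjointFr/(_ (subsetP XU x xX)); rewrite (subsetP XU' x xX).
have [XB neX] := Aset_mid XA i_ntop (lt0n_neq0 i_gt0).
have [X1 X1B ltX1X] := glex_lt_neq_min XB neX.
move: XB X1B; rewrite !inE => /andP[_ /eqP cXi] /andP[X1U /eqP cX1].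
have ltii' : i < i' by apply: (@Acard_gt (mrank M)) i_gt0 _; rewrite -cY -cXi.
by rewrite (negbTE (ustar_exchange sU sU' ltii' XU XU' cXi X1U cX1)) in ltX1X.
Qed.

Lemma Aset_disjoint k k' U U' : k < mrank M -> k' < mrank M ->
  U \in Ustar_k M k -> U' \in Ustar_k M k' -> U != U' -> Aset M k U :&: Aset M k' U' = set0.
Proof.
wlog lekk' : k k' U U' / k <= k'.
  move=> gen kr k'r Uk Uk' neUU'; case: (leqP k k') => [le | /ltnW le]; first exact: gen.
  by rewrite setIC gen // eq_sym.
move=> kr k'r Uk Uk' neUU'; apply/setP => X; rewrite !inE; apply/negP => /andP[XA XA'].
have [XU cX] := mem_Aset XA; have [XU' cX'] := mem_Aset XA'.
have [F sU] := Ustar_kP Uk; have [F' sU'] := Ustar_kP Uk'.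
move/eqP: neUU'; apply.
have [k0 | k_gt0] := posnP k; last first.
  have k'_gt0 := leq_trans k_gt0 lekk'.
  rewrite Acard_id // in cX; rewrite Acard_id // cX in cX'.
  by rewrite -cX' in sU'; apply: ustar_eq sU sU' XU XU' cX.
rewrite k0 in sU; have [k'0 | k'_gt0] := posnP k'.
  by rewrite k'0 in sU'; apply: ustar_eq sU sU' (sub0set U) (sub0set U') (cards0 _).
have /set0Pn[x xX] : X != set0 by rewrite -card_gt0 cX' Acard_id.
have := ustar0_disjoint sU sU' k'_gt0.
by move/disjointFr/(_ (subsetP XU x xX)); rewrite (subsetP XU' x xX).
Qed.

End Aset.

Theorem lemma5p4 (n : nat) (M : matroid n) :
  antichain (AM M) /\
  (forall (k k' : nat) (U U' : {set 'I_n}),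
     k < mrank M -> k' < mrank M ->
     U \in Ustar_k M k -> U' \in Ustar_k M k' -> U != U' ->
     Aset M k U :&: Aset M k' U' = set0).
Proof. by split; [exact: AM_antichain | exact: Aset_disjoint]. Qed.
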